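(* Let $\mathbf{L}=(L,\le)$ be a finite lattice with more than two elements (least element $0$, greatest element $1$) and let $(R,\vee,\circ)$ be a subsemiring of $(\mathrm{Res}_1(\mathbf{L}),\vee,\circ)$ such that (i) $f_{a,0}\in R$ for every $a\in L\setminus\{1\}$; (ii) for every $f\in R$ there exists $a\in L\setminus\{1\}$ with $f_{a,0}\le f$ (pointwise); (iii) for all $a\in L\setminus\{0,1\}$ and all $b\in L$ there exists $f\in R$ with $f(a)=b$. Then $(R,\vee,\circ)$ is a finite simple additively idempotent semiring whose greatest element is right but not left absorbing. Conversely, every finite simple additively idempotent semiring $(S,+,\cdot)$ with $|S|>2$ whose greatest element is right but not left absorbing is isomorphic to such a semiring $(R,\vee,\circ)$ for some such lattice $\mathbf{L}$.
   Context: A semiring is a nonempty set with a commutative semigroup operation $+$ and a semigroup operation $\cdot$ satisfying both distributive laws. It is simple if its only congruences are the identity and the full relation; additively idempotent if $r+r=r$; then $x\le y:\Leftrightarrow x+y=y$ is a partial order, and for finite semirings the greatest element is the sum of all elements. An element $r$ is right absorbing if $sr=r$ for all $s$, left absorbing if $rs=r$ for all $s$. For a finite lattice $\mathbf{L}$, $\mathrm{Res}_1(\mathbf{L})$ is the set of maps $f:L\to L$ preserving binary joins with $f(0)=0$ and $f(1)=1$, a semiring under pointwise join and composition. For $a,b\in L$, $f_{a,b}:L\to L$ is defined by $f_{a,b}(x)=b$ if $x\le a$ and $f_{a,b}(x)=1$ otherwise. *)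

From HB Require Import structures.
From mathcomp Require Import all_boot all_order.
Set Implicit Arguments. Unset Strict Implicit. Unset Printing Implicit Defensive.
Import Order.TTheory.
Local Open Scope order_scope.

Section SemiringOn.
Variables (T : Type) (A : T -> Prop) (add mul : T -> T -> T).

Definition semiring_on : Prop :=
  [/\ (exists x, A x) /\
        (forall x y, A x -> A y -> A (add x y) /\ A (mul x y)),
      (forall x y, A x -> A y -> add x y = add y x),
      (forall x y z, A x -> A y -> A z -> add x (add y z) = add (add x y) z),
      (forall x y z, A x -> A y -> A z -> mul x (mul y z) = mul (mul x y) z)
    & (forall x y z, A x -> A y -> A z ->
         mul x (add y z) = add (mul x y) (mul x z) /\
         mul (add x y) z = add (mul x z) (mul y z))].

Definition congruence_on (r : T -> T -> Prop) : Prop :=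
  [/\ (forall x, A x -> r x x),
      (forall x y, A x -> A y -> r x y -> r y x),
      (forall x y z, A x -> A y -> A z -> r x y -> r y z -> r x z)
    & (forall x y u v, A x -> A y -> A u -> A v -> r x y -> r u v ->
         r (add x u) (add y v) /\ r (mul x u) (mul y v))].

Definition simple_on : Prop :=
  forall r, congruence_on r ->
    (forall x y, A x -> A y -> (r x y <-> x = y)) \/
    (forall x y, A x -> A y -> r x y).

Definition add_idempotent_on : Prop := forall x, A x -> add x x = x.

(** greatest element w.r.t. x <= y :<-> x + y = y *)
Definition greatest_on (g : T) : Prop := A g /\ forall x, A x -> add x g = g.

Definition right_absorbing_on (g : T) : Prop := forall s, A s -> mul s g = g.
Definition left_absorbing_on (g : T) : Prop := forall s, A s -> mul g s = g.

Definition greatest_right_not_left_absorbing_on : Prop :=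
  exists g, [/\ greatest_on g, right_absorbing_on g & ~ left_absorbing_on g].

End SemiringOn.

Section Res1.
Variables (d : Order.disp_t) (L : finTBLatticeType d).

Definition Res1 (f : {ffun L -> L}) : Prop :=
  [/\ (forall x y, f (x `|` y) = f x `|` f y), f \bot = \bot & f \top = \top].

Definition fjoin (f g : {ffun L -> L}) : {ffun L -> L} := [ffun x => f x `|` g x].
Definition fcomp (f g : {ffun L -> L}) : {ffun L -> L} := [ffun x => f (g x)].

Definition fab (a b : L) : {ffun L -> L} := [ffun x => if x <= a then b else \top].

Definition subsemiring_Res1 (R : {set {ffun L -> L}}) : Prop :=
  [/\ R != set0,
      (forall f, f \in R -> Res1 f)
    & (forall f g, f \in R -> g \in R -> fjoin f g \in R /\ fcomp f g \in R)].

Definition conditions_Res1 (R : {set {ffun L -> L}}) : Prop :=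
  [/\ (forall a : L, a != \top -> fab a \bot \in R),
      (forall f, f \in R -> exists a : L, a != \top /\ forall x, fab a \bot x <= f x)
    & (forall a : L, a != \bot -> a != \top -> forall b : L,
         exists2 f, f \in R & f a = b)].

End Res1.

From HB Require Import structures.
From mathcomp Require Import all_boot all_order.
From Stdlib Require Import Classical.
Import Order.TTheory.
Local Open Scope order_scope.
Set Implicit Arguments. Unset Strict Implicit. Unset Printing Implicit Defensive.

(* (=>) [f_{0,0}] is the greatest element of R, and every element lies above some [f_{a,0}].
   A congruence identifying two distinct elements also identifies, after composing with some
   [f_{c,0}], a map vanishing at a point v with a {0,1}-valued map sending v to 1.
   Precomposing both with a map of R sending a to v (condition (iii)) identifies [f_{a,0}]
   with some [f_{a',0}], a' < a; descending, everything is identified with [f_{0,0}].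
   (<=) Let g be the greatest element. The left ideal gS, ordered dually to S and with a
   top adjoined, is a finite lattice L on which the right multiplications psi_s(e) = es
   preserve meets; their lower adjoints rho(s) lie in Res_1(L), and rho is a semiring
   morphism because psi_(s+t) = psi_s /\ psi_t and psi_(st) = psi_t o psi_s. For e in gS,
   rho(e) = f_{e,0}. Injectivity of rho and conditions (ii) and (iii) each follow by applying
   simplicity to a suitable congruence. *)

Lemma lt_fin_ind d (T : finPOrderType d) (P : T -> Prop) :
  (forall a, (forall b, b < a -> P b) -> P a) -> forall a, P a.
Proof.
move=> IH a; have [n] := ubnP #|[pred z | z < a]|; elim: n a => // n IHn a ha.
apply: IH => b ltba; apply: IHn; rewrite ltnS in ha; apply: leq_trans ha.
apply: proper_card; apply/properP; split.
  by apply/subsetP => z; rewrite !inE => /lt_trans; apply.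
by exists b; rewrite !inE ?ltba ?ltxx.
Qed.

Section Res1Maps.
Variables (d : Order.disp_t) (L : finTBLatticeType d).
Implicit Types (f : {ffun L -> L}) (a x : L).

Lemma card_gt2_mid : (2 < #|L|)%N -> exists a : L, (a != \bot) && (a != \top).
Proof.
move=> hL; case: (pickP (fun a : L => (a != \bot) && (a != \top))) => [a ha|none].
  by exists a.
suff: (#|L| <= 2)%N by rewrite leqNgt hL.
rewrite -cardsT; apply: leq_trans (_ : #|[set \bot; \top]| <= 2)%N; last first.
  by rewrite cards2 ltnS leq_b1.
apply/subset_leq_card/subsetP => x _; have := none x.
by rewrite !inE; case: eqP; case: eqP.
Qed.

Lemma bot_neq_top a : a != \bot -> (\bot : L) != \top.
Proof. by apply: contraNneq => bot_top; rewrite -lex0 bot_top lex1. Qed.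

Lemma Res1_homo f : Res1 f -> {homo f : x y / x <= y}.
Proof. by case=> fU _ _ x y /join_r <-; rewrite fU leUl. Qed.

Lemma Res1_fab f a x : Res1 f -> f (fab a \bot x) = fab a \bot x.
Proof. by case=> _ f0 f1; rewrite ffunE; case: ifP. Qed.

Lemma Res1_two_valued f : Res1 f -> (forall x, (f x == \bot) || (f x == \top)) ->
  f = fab (\join_(x | f x == \bot) x) \bot.
Proof.
move=> fRes1 f2; set a := \join_(x | _) x.
have fa : f a = \bot.
  by case: fRes1 => fU f0 _; rewrite /a (big_morph f fU f0); apply: big1 => x /eqP.
apply/ffunP => x; rewrite ffunE; case: ifP => [le_xa|].
  by apply/eqP; rewrite -lex0 -fa Res1_homo.
by case/orP: (f2 x) => /eqP fx // /negP[]; apply: joins_sup; rewrite fx.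
Qed.

Definition ftop : {ffun L -> L} := fab \bot \bot.

Lemma fjoin_ftop f : Res1 f -> fjoin f ftop = ftop.
Proof.
case=> _ f0 _; apply/ffunP => x; rewrite !ffunE lex0.
by case: eqP => [->|_]; rewrite ?f0 ?joinxx ?joinx1.
Qed.

Lemma fcomp_ftop f : Res1 f -> fcomp f ftop = ftop.
Proof. by move=> fRes1; apply/ffunP => x; rewrite ffunE Res1_fab. Qed.

Lemma fcomp_ftop_fab a : a != \bot -> fcomp ftop (fab a \bot) != ftop.
Proof.
move=> a0; apply/eqP => /ffunP /(_ a); rewrite !ffunE !lexx lex0 (negbTE a0).
by apply/eqP; apply: bot_neq_top a0.
Qed.

Lemma fjoin_fab_le f a : (forall x, fab a \bot x <= f x) -> fjoin f (fab a \bot) = f.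
Proof. by move=> le_af; apply/ffunP => x; rewrite ffunE join_l. Qed.

End Res1Maps.

Arguments ftop {d} L.

Section SimpleRes1.
Variables (d : Order.disp_t) (L : finTBLatticeType d) (R : {set {ffun L -> L}}).
Hypothesis R_Res1 : {in R, forall f, Res1 f}.
Hypothesis R_join : {in R &, forall f g, fjoin f g \in R}.
Hypothesis R_comp : {in R &, forall f g, fcomp f g \in R}.
Hypothesis R_fab : forall a : L, a != \top -> fab a \bot \in R.
Hypothesis R_fab_le :
  forall f, f \in R -> exists a : L, a != \top /\ forall x, fab a \bot x <= f x.
Hypothesis R_reach :
  forall a : L, a != \bot -> a != \top -> forall b, exists2 f, f \in R & f a = b.
Hypothesis bot_top : (\bot : L) != \top.

Let ftop_R : ftop L \in R := R_fab bot_top.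

Section Congruence.
Variable r : {ffun L -> L} -> {ffun L -> L} -> Prop.
Hypothesis r_cong : congruence_on (fun f => f \in R) (@fjoin d L) (@fcomp d L) r.

Let r_refl f : f \in R -> r f f.
Proof. by case: r_cong => + _ _ _; apply. Qed.

Let r_sym f g : f \in R -> g \in R -> r f g -> r g f.
Proof. by case: r_cong => _ + _ _; apply. Qed.

Let r_trans f g h : f \in R -> g \in R -> h \in R -> r f g -> r g h -> r f h.
Proof. by case: r_cong => _ _ + _; apply. Qed.

Let r_compat f g f' g' : f \in R -> g \in R -> f' \in R -> g' \in R -> r f g -> r f' g' ->
  r (fjoin f f') (fjoin g g') /\ r (fcomp f f') (fcomp g g').
Proof. by case: r_cong => _ _ _; apply. Qed.

Lemma congr_le_pair x y : x \in R -> y \in R -> r x y -> x != y ->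
  exists G H, [/\ G \in R, H \in R, r G H, G != H & forall z, G z <= H z].
Proof.
move=> xR yR rxy nxy; have xyR := R_join xR yR.
have r_xy_y : r (fjoin x y) y.
  have [+ _] := r_compat xR yR yR yR rxy (r_refl yR).
  by rewrite (_ : fjoin y y = y) //; apply/ffunP => z; rewrite ffunE joinxx.
have [xy_y|xy_y] := eqVneq (fjoin x y) y.
  by exists x, y; split => // z; rewrite -xy_y ffunE leUl.
exists y, (fjoin x y); split => //; first exact: r_sym r_xy_y.
- by rewrite eq_sym.
- by move=> z; rewrite ffunE leUr.
Qed.

Section Separated.
Variables (u w : {ffun L -> L}) (v : L).
Hypotheses (uR : u \in R) (wR : w \in R) (ruw : r u w).
Hypotheses (uv : u v = \bot) (wv : w v = \top).
Hypothesis w_two_valued : forall z, (w z == \bot) || (w z == \top).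

Lemma congr_fab_step a : a != \bot -> a != \top ->
  exists2 a', a' < a & r (fab a \bot) (fab a' \bot).
Proof.
move=> a0 a1; have [k kR ka] := R_reach a0 a1 v.
(* [k'] agrees with [k] below [a] and is 1 elsewhere, so [u o k' = f_{a,0}], while [w o k']
   is some [f_{a',0}] with [a' < a] because [w (k' a) = w v = 1]. *)
set k' := fjoin k (fab a \bot).
have k'R : k' \in R by apply: R_join => //; apply: R_fab.
have k'E z : k' z = if z <= a then k z else \top.
  by rewrite !ffunE; case: ifP; rewrite ?joinx0 ?joinx1.
have u_k' : fcomp u k' = fab a \bot.
  apply/ffunP => z; rewrite ffunE k'E [RHS]ffunE; case: ifP => [le_za|_].
    by apply/eqP; rewrite -lex0 -uv (Res1_homo (R_Res1 uR)) // -ka (Res1_homo (R_Res1 kR)).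
  by case: (R_Res1 uR).
have wk'R : fcomp w k' \in R by apply: R_comp.
have wk'_two_valued z : (fcomp w k' z == \bot) || (fcomp w k' z == \top).
  by rewrite ffunE w_two_valued.
have wk'_fab := Res1_two_valued (R_Res1 wk'R) wk'_two_valued.
set a' := \join_(z | _) z in wk'_fab.
have w1 : w \top = \top by case: (R_Res1 wR).
exists a'.
  rewrite lt_leAnge; apply/andP; split.
    have : fcomp w k' a' = \bot by rewrite wk'_fab ffunE lexx.
    rewrite ffunE k'E; case: ifP => // _; rewrite w1 => /eqP.
    by rewrite eq_sym (negbTE bot_top).
  apply/negP => le_aa'; have : fcomp w k' a = \bot by rewrite wk'_fab ffunE le_aa'.
  by rewrite ffunE k'E lexx ka wv => /eqP; rewrite eq_sym (negbTE bot_top).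
rewrite -u_k' -wk'_fab.
by have [] := r_compat uR wR k'R k'R ruw (r_refl k'R).
Qed.

Lemma congr_fab_ftop a : a != \top -> r (fab a \bot) (ftop L).
Proof.
elim/lt_fin_ind: a => a IH a1.
have [->|a0] := eqVneq a \bot; first exact: r_refl ftop_R.
have [a' lt_a'a ra'] := congr_fab_step a0 a1.
have a'1 : a' != \top by rewrite -ltx1 (lt_le_trans lt_a'a) ?lex1.
exact: r_trans (R_fab a1) (R_fab a'1) ftop_R ra' (IH a' lt_a'a a'1).
Qed.

Lemma congr_ftop f : f \in R -> r f (ftop L).
Proof.
move=> fR; have [a [a1 le_af]] := R_fab_le fR.
have [+ _] := r_compat fR fR (R_fab a1) ftop_R (r_refl fR) (congr_fab_ftop a1).
by rewrite fjoin_fab_le // fjoin_ftop //; apply: R_Res1.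
Qed.

End Separated.

Lemma congr_full x y : x \in R -> y \in R -> r x y -> x != y ->
  forall f g, f \in R -> g \in R -> r f g.
Proof.
move=> xR yR rxy nxy; have [G [H [GR HR rGH nGH le_GH]]] := congr_le_pair xR yR rxy nxy.
have [v nGHv] : exists v, G v != H v.
  apply/existsP; apply: contraNT nGH => /existsPn eqGH.
  by apply/eqP/ffunP => z; apply/eqP/negPn/eqGH.
pose c := G v.
have c1 : c != \top.
  by apply: contraNneq nGHv => Gv1; apply/eqP/le_anti; rewrite le_GH -/c Gv1 lex1.
have nle_Hvc : ~~ (H v <= c) by apply: contra nGHv => le_Hv; rewrite eq_le le_Hv le_GH.
have cR := R_fab c1.
have r_sep := congr_ftop (v := v) (R_comp cR GR) (R_comp cR HR).
have r_ftop f : f \in R -> r f (ftop L).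
  apply: r_sep; rewrite ?ffunE -/c ?lexx ?(negbTE nle_Hvc) //.
  - by have [] := r_compat cR cR GR HR (r_refl cR) rGH.
  - by move=> z; rewrite !ffunE; case: ifP => _; rewrite eqxx ?orbT.
move=> f h fR hR.
exact: r_trans fR ftop_R hR (r_ftop f fR) (r_sym hR ftop_R (r_ftop h hR)).
Qed.

End Congruence.

Lemma subsemiring_Res1_simple : simple_on (fun f => f \in R) (@fjoin d L) (@fcomp d L).
Proof.
move=> r r_cong.
have [[x [y [xR yR rxy nxy]]]|r_id] :=
  classic (exists x y, [/\ x \in R, y \in R, r x y & x != y]).
  by right; apply: (congr_full r_cong xR yR rxy nxy).
left=> x y xR yR; split=> [rxy|<-]; last by case: r_cong => + _ _ _; apply.
by apply/eqP; apply: contraT => nxy; case: r_id; exists x, y.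
Qed.

End SimpleRes1.

Lemma subsemiring_Res1_semiring d (L : finTBLatticeType d) (R : {set {ffun L -> L}}) :
  subsemiring_Res1 R -> semiring_on (fun f => f \in R) (@fjoin d L) (@fcomp d L).
Proof.
case=> /set0Pn [f fR] R_Res1 R_closed; split.
- by split=> [|x y xR yR]; [exists f | apply: R_closed].
- by move=> x y _ _; apply/ffunP => z; rewrite !ffunE joinC.
- by move=> x y z _ _ _; apply/ffunP => w; rewrite !ffunE joinA.
- by move=> x y z _ _ _; apply/ffunP => w; rewrite !ffunE.
- move=> x y z xR _ _; split; apply/ffunP => w; rewrite !ffunE //.
  by case: (R_Res1 x xR) => ->.
Qed.

Lemma Res1_subsemiring_simple_semiring d (L : finTBLatticeType d) (R : {set {ffun L -> L}}) :
  (2 < #|L|)%N -> subsemiring_Res1 R -> conditions_Res1 R ->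
  let A := fun f => f \in R in
  [/\ semiring_on A (@fjoin d L) (@fcomp d L),
      simple_on A (@fjoin d L) (@fcomp d L),
      add_idempotent_on A (@fjoin d L)
    & greatest_right_not_left_absorbing_on A (@fjoin d L) (@fcomp d L)].
Proof.
move=> hL R_sub [R_fab R_fab_le R_reach] A.
have [a /andP[a0 a1]] := card_gt2_mid hL.
have bot_top := bot_neq_top a0.
have [_ R_Res1 R_closed] := R_sub.
split.
- exact: subsemiring_Res1_semiring.
- apply: subsemiring_Res1_simple R_fab_le R_reach bot_top => // f g fR gR;
  by case: (R_closed f g fR gR).
- by move=> f _; apply/ffunP => x; rewrite ffunE joinxx.
- exists (ftop L); split.
  + by split=> [|f /R_Res1]; [exact: R_fab | exact: fjoin_ftop].
  + by move=> f /R_Res1; exact: fcomp_ftop.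
  + by move/(_ _ (R_fab a a1))/eqP; apply/negP/fcomp_ftop_fab.
Qed.

Section GaloisConnection.
Variables (d : Order.disp_t) (T : tbLatticeType d).
Implicit Types (phi psi : T -> T).

Definition galois_connection phi psi := forall x y, (phi x <= y) = (x <= psi y).

Lemma gc_uniq phi1 phi2 psi :
  galois_connection phi1 psi -> galois_connection phi2 psi -> phi1 =1 phi2.
Proof. by move=> gc1 gc2 x; apply/eqP/eq_leP => y; rewrite gc1 gc2. Qed.

Lemma gc_inj phi psi1 psi2 :
  galois_connection phi psi1 -> galois_connection phi psi2 -> psi1 =1 psi2.
Proof. by move=> gc1 gc2 y; apply/le_anti; rewrite -gc2 gc1 lexx -gc1 gc2 lexx. Qed.

Lemma gc_join phi psi : galois_connection phi psi -> {morph phi : x y / x `|` y}.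
Proof. by move=> gc x y; apply/eqP/eq_leP => z; rewrite gc !leUx !gc. Qed.

Lemma gc0 phi psi : galois_connection phi psi -> phi \bot = \bot.
Proof. by move=> gc; apply/eqP; rewrite -lex0 gc le0x. Qed.

Lemma gc1 phi psi : galois_connection phi psi ->
  (forall y, psi y = \top -> y = \top) -> phi \top = \top.
Proof.
move=> gc psi1; apply/eqP/eq_leP => y; rewrite gc !le1x.
by apply/eqP/eqP => [/psi1 //|->]; apply/eqP; rewrite -le1x -gc lex1.
Qed.

Lemma gc_comp phi1 phi2 psi1 psi2 :
  galois_connection phi1 psi1 -> galois_connection phi2 psi2 ->
  galois_connection (phi1 \o phi2) (psi2 \o psi1).
Proof. by move=> gc1 gc2 x y; rewrite /= gc1 gc2. Qed.

Lemma gc_meet phi1 phi2 psi1 psi2 :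
  galois_connection phi1 psi1 -> galois_connection phi2 psi2 ->
  galois_connection (fun x => phi1 x `|` phi2 x) (fun y => psi1 y `&` psi2 y).
Proof. by move=> gc1 gc2 x y; rewrite leUx lexI gc1 gc2. Qed.

End GaloisConnection.

Section LowerAdjoint.
Variables (d : Order.disp_t) (T : finTBLatticeType d).

Definition ladj (psi : T -> T) (x : T) : T := \meet_(y | x <= psi y) y.

Lemma ladj_gc (psi : T -> T) : {morph psi : y z / y `&` z} -> psi \top = \top ->
  galois_connection (ladj psi) psi.
Proof.
move=> psiI psi1 x y; apply/idP/idP => [le_y|le_x]; last by rewrite /ladj; apply: meets_inf.
have psi_homo z z' : z <= z' -> psi z <= psi z' by move=> /meet_l <-; rewrite psiI leIr.
have le_x : x <= psi (ladj psi x).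
  rewrite /ladj; elim/big_rec: _ => [|z m le_xz le_xm]; first by rewrite psi1 lex1.
  by rewrite psiI lexI le_xz le_xm.
exact: le_trans le_x (psi_homo _ _ le_y).
Qed.

End LowerAdjoint.

Section Representation.
Variables (S : finType) (add mul : S -> S -> S) (g : S).
Hypothesis S_semiring : semiring_on (fun _ : S => True) add mul.
Hypothesis S_simple : simple_on (fun _ : S => True) add mul.
Hypothesis S_add_idem : add_idempotent_on (fun _ : S => True) add.
Hypothesis S_card : (2 < #|S|)%N.
Hypothesis g_greatest : greatest_on (fun _ : S => True) add g.
Hypothesis g_rabs : right_absorbing_on (fun _ : S => True) mul g.
Hypothesis g_not_labs : ~ left_absorbing_on (fun _ : S => True) mul g.

Let addC x y : add x y = add y x.
Proof. by case: S_semiring => _ + _ _ _; apply. Qed.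
Let addA x y z : add x (add y z) = add (add x y) z.
Proof. by case: S_semiring => _ _ + _ _; apply. Qed.
Let mulA x y z : mul x (mul y z) = mul (mul x y) z.
Proof. by case: S_semiring => _ _ _ + _; apply. Qed.
Let mulDr x y z : mul x (add y z) = add (mul x y) (mul x z).
Proof. by case: S_semiring => _ _ _ _ /(_ x y z I I I) []. Qed.
Let mulDl x y z : mul (add x y) z = add (mul x z) (mul y z).
Proof. by case: S_semiring => _ _ _ _ /(_ x y z I I I) []. Qed.
Let addxx x : add x x = x. Proof. exact: S_add_idem. Qed.
Let addxg x : add x g = g. Proof. by case: g_greatest => _; apply. Qed.
Let mulxg x : mul x g = g. Proof. exact: g_rabs. Qed.

Lemma add_absorb x y z : add x (add y z) = x -> add x y = x.
Proof. by move=> xyz; rewrite -{1}xyz -addA [add (add y z) y]addC [add y (add y z)]addA addxx xyz. Qed.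

Lemma g_mul_neq : exists t, mul g t != g.
Proof.
have [t|none] := pickP (fun t => mul g t != g); first by exists t.
by case: g_not_labs => s _; apply/eqP/negbFE/none.
Qed.

Definition compatible_map T (h : S -> T) := forall x y u v, h x = h y -> h u = h v ->
  h (add x u) = h (add y v) /\ h (mul x u) = h (mul y v).

Lemma simple_kernel T (h : S -> T) : compatible_map h -> injective h \/ forall x y, h x = h y.
Proof.
move=> h_compat.
have h_cong : congruence_on (fun _ => True) add mul (fun x y => h x = h y).
  by split=> [x _|x y _ _ ->|x y z _ _ _ -> ->|x y u v _ _ _ _]; last exact: h_compat.
have [h_id|h_full] := S_simple h_cong.
- by left=> x y /(h_id x y I I).
- by right=> x y; apply: h_full.
Qed.

Lemma simple_ideal (I : pred S) :
  (forall s t, I s -> I (add s t)) -> (forall s t, I s -> I (mul s t) /\ I (mul t s)) ->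
  forall x y, x != y -> I x -> I y -> forall s, I s.
Proof.
move=> I_addl I_mul x y nxy Ix Iy.
have I_addr s t : I t -> I (add s t) by rewrite addC; apply: I_addl.
have I_mull s t : I s -> I (mul s t) by case/(I_mul s t).
have I_mulr s t : I t -> I (mul s t) by case/(I_mul t s).
pose h s := if I s then None else Some s.
have h_II s t : I s -> I t -> h s = h t by rewrite /h => -> ->.
have h_eq s t : h s = h t -> s = t \/ I s /\ I t.
  by rewrite /h; case: ifP; case: ifP => // Is It; [right|move=> [->]; left].
have [h_inj|h_const] : injective h \/ forall s t, h s = h t.
  apply: simple_kernel => s t u v /h_eq[<-|[Is It]] /h_eq[<-|[Iu Iv]] //;
  by split; apply: h_II; by [apply: I_addl | apply: I_addr | apply: I_mull | apply: I_mulr].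
- by case/eqP: nxy; apply: h_inj; apply: h_II.
- by move=> s; have := h_const s x; rewrite /h Ix; case: ifP.
Qed.

(* [gS] is the left ideal [g S]; the lattice is [gS] ordered dually to [S], with a new top
   element [None], so that the sum of [S] becomes the meet and [g] the bottom. *)
Definition gS := {e : S | mul g e == e}.

Fact gS_addP (a b : gS) : mul g (add (val a) (val b)) == add (val a) (val b).
Proof. by rewrite mulDr (eqP (valP a)) (eqP (valP b)). Qed.

Fact gS_mulP (a : gS) s : mul g (mul (val a) s) == mul (val a) s.
Proof. by rewrite mulA (eqP (valP a)). Qed.

Definition gS_add a b : gS := exist (fun e => mul g e == e) _ (gS_addP a b).
Definition gS_mul a s : gS := exist (fun e => mul g e == e) _ (gS_mulP a s).
Definition gS_g : gS := exist (fun e => mul g e == e) g (introT eqP (mulxg g)).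

Lemma mul_gS s (e : gS) : mul s (val e) = val e.
Proof. by rewrite -(eqP (valP e)) mulA mulxg. Qed.

Definition L := option gS.
HB.instance Definition _ := Finite.on L.

Definition le_L (x y : L) : bool :=
  if y is Some b then (if x is Some a then add (val a) (val b) == val a else false) else true.

Fact le_L_refl : reflexive le_L.
Proof. by case=> //= a; rewrite addxx. Qed.

Fact le_L_anti : antisymmetric le_L.
Proof.
case=> [a|] [b|] //= /andP[/eqP ab /eqP ba]; congr Some; apply/val_inj => /=.
by rewrite -[LHS]ab addC ba.
Qed.

Fact le_L_trans : transitive le_L.
Proof. by case=> [b|] [a|] [c|] //= /eqP ab /eqP bc; apply/eqP; rewrite -ab -addA bc. Qed.

Definition L_disp : Order.disp_t := Order.Disp tt tt.
HB.instance Definition _ := Order.Le_isPOrder.Build L_disp L le_L_refl le_L_anti le_L_trans.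

Definition meet_L (x y : L) : L :=
  match x, y with Some a, Some b => Some (gS_add a b) | None, _ => y | _, None => x end.

Fact lexI_L (x y z : L) : (x <= meet_L y z) = (x <= y) && (x <= z).
Proof.
case: y z => [b|] [c|] //=; rewrite ?andbT //; case: x => [a|] //=.
apply/eqP/andP => [abc|[/eqP ab /eqP ac]]; last by rewrite addA ab ac.
split; apply/eqP; first exact: add_absorb abc.
by apply: (add_absorb (z := val b)); rewrite (addC (val c)); apply: abc.
Qed.
HB.instance Definition _ := Order.POrder_isMeetSemilattice.Build L_disp L lexI_L.

Fact lex1_L (x : L) : x <= None. Proof. by case: x. Qed.
HB.instance Definition _ := Order.hasTop.Build L_disp L lex1_L.

Definition join_L (x y : L) : L := \meet_(z | (x <= z) && (y <= z)) z.

Fact leUx_L (x y z : L) : (join_L x y <= z) = (x <= z) && (y <= z).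
Proof.
apply/idP/idP => [le_j|le_xyz]; last by apply: meets_inf.
have le_xj : x <= join_L x y by apply/meetsP => w /andP[].
have le_yj : y <= join_L x y by apply/meetsP => w /andP[].
by rewrite (le_trans le_xj le_j) (le_trans le_yj le_j).
Qed.
HB.instance Definition _ := Order.POrder_isJoinSemilattice.Build L_disp L leUx_L.

Fact le0x_L (x : L) : (Some gS_g : L) <= x.
Proof. by case: x => //= a; apply/eqP; rewrite addC addxg. Qed.
HB.instance Definition _ := Order.hasBottom.Build L_disp L le0x_L.

Definition psi (s : S) (y : L) : L := if y is Some e then Some (gS_mul e s) else None.

Lemma psi_meet s : {morph psi s : y z / y `&` z}.
Proof. by case=> [a|] [b|] //=; congr Some; apply/val_inj; rewrite /= mulDl. Qed.

Lemma psi_add s t y : psi (add s t) y = psi s y `&` psi t y.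
Proof. by case: y => [e|] //=; congr Some; apply/val_inj; rewrite /= mulDr. Qed.

Lemma psi_mul s t y : psi (mul s t) y = psi t (psi s y).
Proof. by case: y => [e|] //=; congr Some; apply/val_inj; rewrite /= mulA. Qed.

Lemma psi_gS (e : gS) y : y != \top -> psi (val e) y = Some e.
Proof. by case: y => [a|] // _; congr Some; apply/val_inj; rewrite /= mul_gS. Qed.

Definition rep (s : S) : {ffun L -> L} := [ffun x => ladj (psi s) x].

Lemma rep_gc s : galois_connection (rep s) (psi s).
Proof. by move=> x y; rewrite ffunE ladj_gc //; apply: psi_meet. Qed.

Lemma rep_Res1 s : Res1 (rep s).
Proof.
split; [exact: gc_join (rep_gc s) | exact: gc0 (rep_gc s) |].
by apply: (gc1 (rep_gc s)); case.
Qed.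

Lemma rep_addE s t x : rep (add s t) x = rep s x `|` rep t x.
Proof.
have gc_st : galois_connection (rep (add s t)) (fun y => psi s y `&` psi t y).
  by move=> x' y; rewrite rep_gc psi_add.
exact: gc_uniq gc_st (gc_meet (rep_gc s) (rep_gc t)) x.
Qed.

Lemma rep_mulE s t x : rep (mul s t) x = rep s (rep t x).
Proof.
have gc_st : galois_connection (rep (mul s t)) (psi t \o psi s).
  by move=> x' y; rewrite rep_gc psi_mul.
exact: gc_uniq gc_st (gc_comp (rep_gc s) (rep_gc t)) x.
Qed.

Lemma rep_add s t : rep (add s t) = fjoin (rep s) (rep t).
Proof. by apply/ffunP => x; rewrite rep_addE [RHS]ffunE. Qed.

Lemma rep_mul s t : rep (mul s t) = fcomp (rep s) (rep t).
Proof. by apply/ffunP => x; rewrite rep_mulE [RHS]ffunE. Qed.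

Lemma rep_gS (e : gS) : rep (val e) = fab (Some e : L) \bot.
Proof.
apply/ffunP => x; rewrite [RHS]ffunE; apply/eqP/eq_leP => y; rewrite rep_gc.
case: y => [b|]; rewrite ?lex1 // psi_gS //.
by case: ifP; rewrite ?le0x.
Qed.

Lemma rep_g : rep g = fab \bot \bot. Proof. exact: rep_gS gS_g. Qed.

Lemma rep_inj : injective rep.
Proof.
have [t gt] := g_mul_neq.
(* [h s] is [psi s] on [gS], which [rep s] determines; [h] is not constant as [g g = g <> g t] *)
pose h s := [ffun e : gS => mul (val e) s].
have h_compat : compatible_map h.
  move=> x y u v /ffunP hxy /ffunP huv.
  have exy (e : gS) : mul (val e) x = mul (val e) y by have := hxy e; rewrite !ffunE.
  have euv (e : gS) : mul (val e) u = mul (val e) v by have := huv e; rewrite !ffunE.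
  split; apply/ffunP => e; rewrite !ffunE; first by rewrite !mulDr exy euv.
  by rewrite !mulA exy (euv (gS_mul e y)).
have [h_inj|h_const] := simple_kernel h_compat; last first.
  by have /ffunP/(_ gS_g) := h_const t g; rewrite !ffunE mulxg => /eqP; rewrite (negbTE gt).
move=> s u /ffunP rep_su; apply: h_inj; apply/ffunP => e; rewrite !ffunE.
have gc_su : galois_connection (rep s) (psi u) by move=> x y; rewrite -rep_gc rep_su.
by have := gc_inj (rep_gc s) gc_su (Some e); case.
Qed.

Lemma rep_above_gS s : exists e : gS, forall x, rep (val e) x <= rep s x.
Proof.
have [t gt] := g_mul_neq.
(* the elements above some element of [gS] form an ideal containing [g <> g t] *)
pose I s := [exists e : gS, add (val e) s == s].
have I_gS (e : gS) : I (val e) by apply/existsP; exists e; rewrite addxx.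
have /existsP[e /eqP es] : I s.
  apply: (@simple_ideal I _ _ g (mul g t)); rewrite ?(I_gS gS_g) ?(I_gS (gS_mul gS_g t)) //.
  - by move=> x y /existsP[e /eqP ex]; apply/existsP; exists e; rewrite addA ex.
  - move=> x y /existsP[e /eqP ex]; split; apply/existsP.
      by exists (gS_mul e y); rewrite /= -mulDl ex.
    by exists e; rewrite -{1}(mul_gS y e) -mulDr ex.
  - by rewrite eq_sym.
by exists e => x; rewrite -es rep_addE leUl.
Qed.

Lemma rep_orbit_not_two_valued (ea : gS) : (Some ea : L) != \bot ->
  ~ (forall u, (rep u (Some ea) == \bot) || (rep u (Some ea) == \top)).
Proof.
set a : L := Some ea => a0 two_valued.
have bt := bot_neq_top a0; have tb : (\top : L) != \bot by rewrite eq_sym.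
have rep_fix s u : rep s (rep u a) = rep u a.
  by case/orP: (two_valued u) => /eqP ->; case: (rep_Res1 s).
have h_compat : compatible_map (fun s => rep s a).
  by move=> x y u v /= hxy huv; rewrite !rep_addE !rep_mulE hxy huv !rep_fix.
have [h_inj|h_const] := simple_kernel h_compat.
- have top_inj : injective (fun s => rep s a == \top).
    move=> s t /= st; apply: h_inj => /=.
    case/orP: (two_valued s) st => /eqP ->; case/orP: (two_valued t) => /eqP ->;
    by rewrite ?eqxx ?(negbTE bt) ?(negbTE tb).
  by have := leq_card _ top_inj; rewrite card_bool leqNgt S_card.
- have := h_const g (val ea); rewrite rep_g rep_gS !ffunE lexx lex0 (negbTE a0).
  by move/eqP; rewrite (negbTE tb).
Qed.

Lemma rep_reach (a : L) : a != \bot -> a != \top -> forall b, exists s, rep s a = b.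
Proof.
case: a => [ea|] // a0 _; set a : L := Some ea in a0 *.
have bt := bot_neq_top a0.
(* [h s] is the action of [rep s] on the orbit of [a]. If [h] is injective, the largest
   orbit element below [b] is [b] itself, being separated by [rep] exactly as [b] is. If [h]
   is constant, the orbit is {0,1}, which [rep_orbit_not_two_valued] excludes. *)
pose h s := [ffun u => rep s (rep u a)].
have hE s u : h s u = rep s (rep u a) by rewrite ffunE.
have h_compat : compatible_map h.
  move=> x y u v /ffunP hxy /ffunP huv.
  have exy w : rep x (rep w a) = rep y (rep w a) by rewrite -!hE hxy.
  have euv w : rep u (rep w a) = rep v (rep w a) by rewrite -!hE huv.
  split; apply/ffunP => w; rewrite !hE; first by rewrite !rep_addE exy euv.
  by rewrite !rep_mulE euv -(rep_mulE v w) exy.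
have [h_inj|h_const] := simple_kernel h_compat; last first.
  case: (rep_orbit_not_two_valued a0) => u.
  case E: (rep u a) => [e|]; last by rewrite orbT.
  have /ffunP/(_ u) := h_const (val e) g; rewrite !hE E rep_g rep_gS !ffunE lexx lex0.
  by case: eqP => // _ /eqP; rewrite (negbTE bt).
case=> [eb|]; last by exists g; rewrite rep_g ffunE lex0 (negbTE a0).
set B := \join_(u | rep u a <= Some eb) rep u a.
have [w wB] : exists w, rep w a = B.
  rewrite /B; elim/big_rec: _ => [|u y _ [w <-]].
    by exists (val ea); rewrite rep_gS ffunE lexx.
  by exists (add u w); rewrite rep_addE.
have B_eb : B <= Some eb by apply/joinsP.
have B_iff u : (rep u a <= Some eb) = (rep u a <= B).
  by apply/idP/idP => [le_ub|/le_trans->//]; rewrite /B (@joins_sup _ _ _ u).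
clearbody B; case: B wB B_eb B_iff => [eB|] // wB _ B_iff.
exists w; rewrite wB; congr Some; apply: val_inj; apply: h_inj; apply/ffunP => u.
by rewrite !hE !rep_gS ![fab _ _ _]ffunE B_iff.
Qed.

Lemma simple_semiring_Res1_rep :
  exists (d : Order.disp_t) (L : finTBLatticeType d) (R : {set {ffun L -> L}}),
    [/\ (2 < #|L|)%N, subsemiring_Res1 R, conditions_Res1 R &
      exists phi : S -> {ffun L -> L},
        [/\ injective phi,
            (forall f, f \in R <-> exists s, phi s = f),
            (forall x y, phi (add x y) = fjoin (phi x) (phi y))
          & (forall x y, phi (mul x y) = fcomp (phi x) (phi y))]].
Proof.
have [t gt] := g_mul_neq.
exists L_disp, L, [set rep s | s : S]; split.
- apply/card_gt2P; exists None, (Some gS_g), (Some (gS_mul gS_g t)); split=> //.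
  by split=> //; apply/eqP => /(f_equal (oapp val g)) /= /esym/eqP; rewrite (negbTE gt).
- split; first by apply/set0Pn; exists (rep g); apply: imset_f.
    by move=> f /imsetP[s _ ->]; apply: rep_Res1.
  move=> f h /imsetP[s _ ->] /imsetP[u _ ->].
  by rewrite -rep_add -rep_mul; split; apply: imset_f.
- split.
  + by case=> [e|] // _; apply/imsetP; exists (val e); rewrite ?rep_gS.
  + move=> f /imsetP[s _ ->]; have [e le_es] := rep_above_gS s.
    by exists (Some e); split=> // x; rewrite -rep_gS.
  + move=> a a0 a1 b; have [s <-] := rep_reach a0 a1 b.
    by exists (rep s); first exact: imset_f.
- exists rep; split; [exact: rep_inj | | exact: rep_add | exact: rep_mul].
  by move=> f; split=> [/imsetP[s _ ->]|[s <-]]; [exists s | exact: imset_f].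
Qed.

End Representation.

Theorem theorem5p2 :
  (forall (d : Order.disp_t) (L : finTBLatticeType d) (R : {set {ffun L -> L}}),
     (2 < #|L|)%N ->
     subsemiring_Res1 R ->
     conditions_Res1 R ->
     let A := fun f => f \in R in
     [/\ semiring_on A (@fjoin d L) (@fcomp d L),
         simple_on A (@fjoin d L) (@fcomp d L),
         add_idempotent_on A (@fjoin d L)
       & greatest_right_not_left_absorbing_on A (@fjoin d L) (@fcomp d L)])
  /\
  (forall (S : finType) (add mul : S -> S -> S),
     let A := fun _ : S => True in
     semiring_on A add mul ->
     simple_on A add mul ->
     add_idempotent_on A add ->
     (2 < #|S|)%N ->
     greatest_right_not_left_absorbing_on A add mul ->
     exists (d : Order.disp_t) (L : finTBLatticeType d) (R : {set {ffun L -> L}}),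
       [/\ (2 < #|L|)%N, subsemiring_Res1 R, conditions_Res1 R &
         exists phi : S -> {ffun L -> L},
           [/\ injective phi,
               (forall f, f \in R <-> exists s, phi s = f),
               (forall x y, phi (add x y) = fjoin (phi x) (phi y))
             & (forall x y, phi (mul x y) = fcomp (phi x) (phi y))]]).
Proof.
split; first exact: Res1_subsemiring_simple_semiring.
move=> S add mul A S_semiring S_simple S_idem S_card [g [g_greatest g_rabs g_not_labs]].
exact: simple_semiring_Res1_rep S_semiring S_simple S_idem S_card g_greatest g_rabs g_not_labs.
Qed.
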